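(* Let $G$ be an undirected graph. If all the prime components of $G$ are Generalized Bartlett graphs, then $G$ is a Generalized Bartlett graph.
   Context: A graph $G=(V,E)$ has a decomposition into components $G_1=(V_1,E_1)$ and $G_2=(V_2,E_2)$ (the induced subgraphs on $V_1,V_2$) if $V=V_1\cup V_2$ with $(V_1\setminus V_2)\cup(V_2\setminus V_1)\ne\emptyset$, $V_1\cap V_2\neq\emptyset$ induces a complete subgraph, and $V_1\cap V_2$ separates $V_1\setminus V_2$ from $V_2\setminus V_1$ (no edge joins a vertex of $V_1\setminus V_2$ to one of $V_2\setminus V_1$). A graph admitting no such decomposition is prime; repeated decomposition breaks any graph into prime components. For an ordering $\sigma:V\to\{1,\dots,p\}$, set $E^\sigma_0=E$, $E^\sigma_i=E^\sigma_{i-1}\cup\{\{u,v\}:u\ne v,\sigma(u)>i,\sigma(v)>i,\{u,\sigma^{-1}(i)\},\{v,\sigma^{-1}(i)\}\in E^\sigma_{i-1}\}$ for $i=1,\dots,p-2$, and $D^\sigma(E)=E^\sigma_{p-2}$. $G$ is Generalized Bartlett if some ordering $\sigma$ admits no $u,v,w$ with $\{u,v\},\{v,w\},\{u,w\}\notin E$ but all in $D^\sigma(E)$. *)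

From mathcomp Require Import all_boot.
Set Implicit Arguments.
Unset Strict Implicit.
Unset Printing Implicit Defensive.

(* A simple undirected graph is a symmetric irreflexive relation [e] on a
   finite vertex type [T].  Induced subgraphs are represented by their vertex
   sets [V : {set T}] (edges: those of [e] between vertices of [V]). *)

Section Graphs.
Variables (T : finType) (e : rel T).

Definition decomposition (V V1 V2 : {set T}) : Prop :=
  [/\ V = V1 :|: V2,
      [&& V1 :\: V2 != set0, V2 :\: V1 != set0 & V1 :&: V2 != set0],
      (forall x y, x \in V1 :&: V2 -> y \in V1 :&: V2 -> x != y -> e x y)
    & (forall x y, x \in V1 :\: V2 -> y \in V2 :\: V1 -> ~~ e x y)].

Definition prime_graph (V : {set T}) : Prop :=
  ~ exists V1 V2, decomposition V V1 V2.

Inductive decomposes_into (P : {set T} -> Prop) : {set T} -> Prop :=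
| DI_prime V : prime_graph V -> P V -> decomposes_into P V
| DI_decomp V V1 V2 : decomposition V V1 V2 ->
    decomposes_into P V1 -> decomposes_into P V2 -> decomposes_into P V.

(* An ordering sigma of V is given as a duplicate-free sequence [s]
   enumerating V: sigma u = (index u s).+1, sigma^{-1}(i) = the w with
   (index w s).+1 = i. *)
Definition sigma (s : seq T) (u : T) : nat := (index u s).+1.

Definition E0 (V : {set T}) : rel T :=
  fun u v => [&& e u v, u \in V & v \in V].

Definition fill_step (s : seq T) (E : rel T) (i : nat) : rel T :=
  fun u v => E u v ||
    [&& u != v, u \in s, v \in s, i < sigma s u, i < sigma s v &
        [exists w : T, [&& w \in s, sigma s w == i, E u w & E v w]]].

Fixpoint Esigma (V : {set T}) (s : seq T) (k : nat) : rel T :=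
  match k with
  | 0 => E0 V
  | k'.+1 => fill_step s (Esigma V s k') k
  end.

Definition Dsigma (V : {set T}) (s : seq T) : rel T :=
  Esigma V s (size s - 2).

Definition is_ordering (V : {set T}) (s : seq T) : Prop :=
  uniq s /\ (forall x, (x \in s) = (x \in V)).

Definition gen_bartlett (V : {set T}) : Prop :=
  exists s, is_ordering V s /\
    ~ exists u v w,
        [/\ [&& ~~ E0 V u v, ~~ E0 V v w & ~~ E0 V u w],
            Dsigma V s u v, Dsigma V s v w & Dsigma V s u w].

End Graphs.

(* Orderings are replaced by injective rankings r : T -> nat.  By the fill-in
   path lemma, {u, v} lies in D^sigma(E) iff u <> v are joined by a path whose
   interior vertices all precede both u and v, so a graph is Generalized
   Bartlett iff some ranking has no triangle of such fill edges made of
   non-edges.  Given a decomposition with clique separator S = V1 :&: V2, the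
   ranking of G2 is first modified so that the clique S comes last: eliminate
   the first vertex x (delete it, make its neighbourhood a clique) and recurse;
   if x lies in the clique, recurse with the neighbourhood of x placed last and
   put x right before the rest of the clique.  Then rank V2 :\: V1 first (as in G2) and V1 afterwards (as in G1).
   Fill paths starting at the earliest vertex of a triangle never cross S,
   which is ranked later, so every fill triangle of G is one of G1 or G2. *)

From mathcomp Require Import all_boot zify.
Set Implicit Arguments.
Unset Strict Implicit.
Unset Printing Implicit Defensive.

Section InteriorPaths.
Variable T : finType.
Implicit Types (H G : rel T) (P Q : pred T) (a b c w : T).

Inductive ipath H P : T -> T -> Prop :=
| ipath_edge a b : H a b -> ipath H P a b
| ipath_cat a c b : ipath H P a c -> P c -> ipath H P c b -> ipath H P a b.

Definition ripath H P a b := a = b \/ ipath H P a b.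

Lemma ipath_sub H P Q a b :
  (forall c, P c -> Q c) -> ipath H P a b -> ipath H Q a b.
Proof.
move=> PQ; elim=> [x y /ipath_edge //|x c y _ IH1 /PQ Qc _ IH2].
exact: ipath_cat IH1 Qc IH2.
Qed.

Lemma ipath_expand H G P a b :
  (forall x y, H x y -> ipath G P x y) -> ipath H P a b -> ipath G P a b.
Proof.
move=> HG; elim=> [x y /HG //|x c y _ IH1 Pc _ IH2].
exact: ipath_cat IH1 Pc IH2.
Qed.

Lemma ipath_sym H P a b : symmetric H -> ipath H P a b -> ipath H P b a.
Proof.
move=> sH; elim=> [x y Hxy|x c y _ IH1 Pc _ IH2]; last exact: ipath_cat IH2 Pc IH1.
by apply: ipath_edge; rewrite sH.
Qed.

Section Support.
Variables (H : rel T) (U : pred T).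
Hypothesis HU : forall x y, H x y -> U x && U y.

Lemma ipath_ends P a b : ipath H P a b -> U a /\ U b.
Proof. by elim=> [x y /HU/andP[]|x c y _ [? _] _ _ [_ ?]]. Qed.

Lemma ipath_sub_in P Q a b :
  (forall c, U c -> P c -> Q c) -> ipath H P a b -> ipath H Q a b.
Proof.
move=> PQ; elim=> [x y Hxy|x c y C1 IH1 Pc _ IH2]; first exact: ipath_edge.
by apply: ipath_cat IH1 _ IH2; apply: PQ Pc; case: (ipath_ends C1).
Qed.

End Support.

Lemma ipath_noint H P a b : (forall c, ~~ P c) -> ipath H P a b -> H a b.
Proof. by move=> nP [//|x c y _ Pc _]; move: (nP c); rewrite Pc. Qed.

Lemma ripath_cat H P a c b :
  ripath H P a c -> [\/ c = a, c = b | P c] -> ripath H P c b -> ripath H P a b.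
Proof.
move=> [->|C1] Pc [<-|C2]; [by left|by right|by right|].
by case: Pc => [Eca|Ecb|Pc]; right;
  [rewrite Eca in C2|rewrite Ecb in C1|apply: ipath_cat C1 Pc C2].
Qed.

Lemma ipath_avoid H P w a b : ipath H P a b ->
  ipath H (predI P (predC1 w)) a b \/
  [/\ P w, ripath H (predI P (predC1 w)) a w & ripath H (predI P (predC1 w)) w b].
Proof.
elim=> [x y Hxy|x c y _ IH1 Pc _ IH2]; first by left; apply: ipath_edge.
have [Ecw|cw] := eqVneq c w.
  subst c; right; split=> //.
    by case: IH1 => [C|[]]; [right|].
  by case: IH2 => [C|[]]; [right|].
have P'c : predI P (predC1 w) c by rewrite /= Pc cw.
case: IH1 => [C1|[Pw A1 B1]]; case: IH2 => [C2|[Pw2 A2 B2]].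
- by left; apply: ipath_cat C1 P'c C2.
- right; split=> //; apply: (ripath_cat (c := c)) A2; last exact: Or33.
  by right.
- right; split=> //; apply: (ripath_cat (c := c)) B1 _ _; first exact: Or33.
  by right.
- by right.
Qed.

Section Shortcut.
Variables (H G : rel T) (X : pred T).
Hypothesis sH : symmetric H.

Definition door q := ~~ X q && [exists y, X y && H q y].

Lemma ipath_exit P a b : ipath H P a b -> ~~ X a -> X b ->
  exists q, door q /\ (q = a \/ P q).
Proof.
elim=> [x y Hxy|x c y _ IH1 Pc _ IH2] Xx Xy.
  by exists x; split; [apply/andP; split=> //; apply/existsP; exists y; apply/andP|left].
case Xc: (X c); first exact: IH1.
have [q [dq Pq]] := IH2 (negbT Xc) Xy.
by exists q; split=> //; right; case: Pq => [->|].
Qed.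

Hypothesis HG : forall x y, ~~ X x -> ~~ X y -> H x y -> G x y.
Hypothesis doorG : forall x y, door x -> door y -> x != y -> G x y.

(* Each maximal run of a path through X is replaced by a G-edge between the
   doors it enters and leaves by; the three cases must be proved together. *)
Lemma ipath_shortcut_ends P a b : ipath H P a b ->
  [/\ ~~ X a -> ~~ X b -> ripath G P a b,
      ~~ X a -> X b -> exists q, [/\ door q, ripath G P a q & q = a \/ P q]
    & X a -> ~~ X b -> exists q, [/\ door q, ripath G P q b & q = b \/ P q]].
Proof.
have door_edge x y : ~~ X x -> X y -> H x y -> door x.
  by move=> Xx Xy Hxy; rewrite /door Xx; apply/existsP; exists y; apply/andP.
elim=> [x y Hxy|x c y _ [I1 J1 K1] Pc _ [I2 J2 K2]].
  split=> Xx Xy; first by right; apply: ipath_edge; apply: HG.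
    by exists x; split; [apply: door_edge Hxy|left|left].
  by exists y; split; [apply: (door_edge _ x); rewrite // sH|left|left].
split=> Xx Xy; case: (boolP (X c)) => Xc.
- have [q1 [d1 R1 P1]] := J1 Xx Xc; have [q2 [d2 R2 P2]] := K2 Xc Xy.
  have R12 : ripath G P q1 q2.
    by have [->|nq] := eqVneq q1 q2; [left|right; apply: ipath_edge; apply: doorG].
  apply: ripath_cat R1 _ (ripath_cat R12 _ R2).
    by case: P1 => [->|]; [apply: Or31|apply: Or33].
  by case: P2 => [->|]; [apply: Or32|apply: Or33].
- exact: ripath_cat (I1 Xx Xc) (Or33 _ _ Pc) (I2 Xc Xy).
- exact: J1.
- have [q [dq R Pq]] := J2 Xc Xy.
  exists q; split=> //; first exact: ripath_cat (I1 Xx Xc) (Or33 _ _ Pc) R.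
  by right; case: Pq => [->|].
- exact: K2.
- have [q [dq R Pq]] := K1 Xx Xc.
  exists q; split=> //; first exact: ripath_cat R (Or33 _ _ Pc) (I2 Xc Xy).
  by right; case: Pq => [->|].
Qed.

Lemma ipath_shortcut P a b :
  ipath H P a b -> ~~ X a -> ~~ X b -> ripath G P a b.
Proof. by case/ipath_shortcut_ends. Qed.

End Shortcut.
End InteriorPaths.

Section Rankings.
Variable T : finType.
Implicit Types (H B : rel T) (U : pred T) (r : T -> nat) (u v w : T).

(* The fill edges created by eliminating the vertices in increasing r-order
   (see [Dsigma_filled]). *)
Definition filled H r u v :=
  u != v /\ ipath H (fun c => (r c < r u) && (r c < r v)) u v.

Definition bartlett_ranking H B r := forall u v w,
  filled H r u v -> filled H r v w -> filled H r u w -> B u v || B v w || B u w.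

Definition bartlett_at H B r u := forall v w, r u < r v -> r u < r w ->
  filled H r u v -> filled H r u w -> filled H r v w -> B u v || B v w || B u w.

Lemma filled_sym H r u v : symmetric H -> filled H r u v -> filled H r v u.
Proof.
move=> sH [nuv C]; split; first by rewrite eq_sym.
by apply: ipath_sym sH _; apply: ipath_sub C => c; rewrite andbC.
Qed.

Lemma filled_edge H r u v : irreflexive H -> H u v -> filled H r u v.
Proof.
move=> iH Huv; split; last exact: ipath_edge.
by apply: contraTneq Huv => ->; rewrite iH.
Qed.

Lemma filled_via_low H r u v w : symmetric H -> filled H r u v -> filled H r u w ->
  r u < r v -> r u < r w -> v != w -> filled H r v w.
Proof.
move=> sH [_ Cuv] [_ Cuw] ltv ltw nvw; split=> //.
apply: (@ipath_cat _ _ _ v u w); [|by rewrite /= ltv ltw|].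
  by apply: ipath_sym sH _; apply: ipath_sub Cuv => c /andP[]; lia.
by apply: ipath_sub Cuw => c /andP[]; lia.
Qed.

Section Support.
Variables (H : rel T) (U : pred T).
Hypothesis HU : forall x y, H x y -> U x && U y.

Lemma filled_of_ripath (P : pred T) r u v : u != v -> ripath H P u v ->
  (forall c, U c -> P c -> (r c < r u) && (r c < r v)) -> filled H r u v.
Proof.
move=> nuv [Euv|C] PQ; first by rewrite Euv eqxx in nuv.
by split=> //; apply: (ipath_sub_in HU _ C) => c Uc Pc; apply: PQ.
Qed.

Lemma filled_mono r1 r2 u v :
  (forall a b, U a -> U b -> r1 a < r1 b -> r2 a < r2 b) ->
  filled H r1 u v -> filled H r2 u v.
Proof.
move=> r12 [nuv C]; have [Uu Uv] := ipath_ends HU C.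
by apply: filled_of_ripath nuv (or_intror C) _ => c Uc /andP[??]; rewrite !r12.
Qed.

Lemma bartlett_ranking_mono B r1 r2 :
  (forall a b, U a -> U b -> r2 a < r2 b -> r1 a < r1 b) ->
  bartlett_ranking H B r1 -> bartlett_ranking H B r2.
Proof. by move=> r21 GB u v w D1 D2 D3; apply: GB; apply: filled_mono r21 _. Qed.

Hypothesis sH : symmetric H.

Lemma bartlett_ranking_min B r : symmetric B -> {in U &, injective r} ->
  (forall u, bartlett_at H B r u) -> bartlett_ranking H B r.
Proof.
move=> sB rinj GB u v w Duv Dvw Duw.
have [[nuv Cuv] [nvw Cvw] [nuw _]] := And3 Duv Dvw Duw.
have [Uu Uv] := ipath_ends HU Cuv; have [_ Uw] := ipath_ends HU Cvw.
have neq a b : U a -> U b -> a != b -> r a != r b.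
  by move=> Ua Ub; apply: contra => /eqP/rinj->.
have ruv := neq _ _ Uu Uv nuv; have rvw := neq _ _ Uv Uw nvw.
have ruw := neq _ _ Uu Uw nuw.
have [Dvu Dwv Dwu] := And3 (filled_sym sH Duv) (filled_sym sH Dvw) (filled_sym sH Duw).
have at_v : r v < r u -> r v < r w -> B u v || B v w || B u w.
  move=> lvu lvw; move: (GB v u w lvu lvw Dvu Dvw Duw); rewrite (sB v u).
  by case: (B u v); case: (B v w); case: (B u w).
have at_w : r w < r u -> r w < r v -> B u v || B v w || B u w.
  move=> lwu lwv; move: (GB w u v lwu lwv Dwu Dwv Duv); rewrite (sB w u) (sB w v).
  by case: (B u v); case: (B v w); case: (B u w).
case: (ltnP (r u) (r v)) => luv; case: (ltnP (r u) (r w)) => luw.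
- exact: GB.
- by apply: at_w; lia.
- by apply: at_v; lia.
- by case: (ltnP (r v) (r w)) => lvw; [apply: at_v|apply: at_w]; lia.
Qed.
End Support.

Lemma bartlett_at_transport H B H' B' r r' u :
  symmetric H' -> (forall a b, B' a b -> B a b) -> bartlett_ranking H' B' r' ->
  (forall b, r u < r b -> filled H r u b -> filled H' r' u b /\ r' u < r' b) ->
  bartlett_at H B r u.
Proof.
move=> sH' BB' GB' transport v w luv luw Duv Duw Dvw.
have [D1 l1] := transport v luv Duv; have [D3 l3] := transport w luw Duw.
have D2 := filled_via_low sH' D1 D3 l1 l3 Dvw.1.
by move: (GB' u v w D1 D2 D3) => /orP[/orP[]|] /BB' ->; rewrite ?orbT.
Qed.

End Rankings.

Section Stacking.
Variable T : finType.
Implicit Types (V A : {set T}) (r : T -> nat).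

Definition stack A r1 r2 N a := if a \in A then r1 a else N + r2 a.

Definition cons_rank (x : T) r a := if a == x then 0 else (r a).+1.

Lemma rank_bound V r : exists N, forall a, a \in V -> r a < N.
Proof. by exists (\max_(a in V) r a).+1 => a aV; rewrite ltnS leq_bigmax_cond. Qed.

Lemma stack_inj V A r1 r2 N : (forall a, a \in V :&: A -> r1 a < N) ->
  {in V :&: A &, injective r1} -> {in V :\: A &, injective r2} ->
  {in V &, injective (stack A r1 r2 N)}.
Proof.
move=> lt1 inj1 inj2 a b aV bV; rewrite /stack.
have [aA|aA] := boolP (a \in A); have [bA|bA] := boolP (b \in A).
- by apply: inj1; rewrite inE ?aV ?bV.
- by have := lt1 a; rewrite inE aV aA => /(_ isT); lia.
- by have := lt1 b; rewrite inE bV bA => /(_ isT); lia.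
- by move/addnI; apply: inj2; rewrite inE ?aV ?bV ?aA ?bA.
Qed.

Lemma stack_lt A r1 r2 N a b : a \in A -> b \notin A -> r1 a < N ->
  stack A r1 r2 N a < stack A r1 r2 N b.
Proof. by rewrite /stack => -> /negbTE->; lia. Qed.

Lemma cons_rank_inj V x r : {in V :\ x &, injective r} ->
  {in V &, injective (cons_rank x r)}.
Proof.
move=> rinj a b aV bV; rewrite /cons_rank.
have [->|ax] := eqVneq a x; have [->|bx] := eqVneq b x => //.
by move=> [E]; apply: (rinj a b) E; rewrite !inE ?ax ?bx.
Qed.

End Stacking.

Section Elimination.
Variables (T : finType) (V : {set T}) (H : rel T) (x : T).
Hypothesis HV : forall a b, H a b -> (a \in V) && (b \in V).
Hypothesis sH : symmetric H.
Hypothesis iH : irreflexive H.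

Definition elim_graph : rel T := fun a b =>
  [&& a != x, b != x & H a b || [&& a != b, H a x & H b x]].

Lemma elim_graph_supp a b : elim_graph a b -> (a \in V :\ x) && (b \in V :\ x).
Proof.
by rewrite !inE => /and3P[-> -> /orP[/HV//|/and3P[_ /HV/andP[-> _] /HV/andP[-> _]]]].
Qed.

Lemma elim_graph_sym : symmetric elim_graph.
Proof.
by move=> a b; rewrite /elim_graph sH [b == a]eq_sym andbCA [H b x && _]andbC.
Qed.

Lemma elim_graph_irr : irreflexive elim_graph.
Proof. by move=> a; rewrite /elim_graph iH eqxx !andbF. Qed.

Lemma filled_elim r a b :
  filled H r a b -> a != x -> b != x -> filled elim_graph r a b.
Proof.
move=> [nab C] ax bx; split=> //.
have HG y z : y != x -> z != x -> H y z -> elim_graph y z.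
  by move=> yx zx Hyz; rewrite /elim_graph yx zx Hyz.
have doorG y z : door H (pred1 x) y -> door H (pred1 x) z -> y != z ->
    elim_graph y z.
  move=> /andP[yx /existsP[_ /andP[/eqP-> Hy]]].
  move=> /andP[zx /existsP[_ /andP[/eqP-> Hz]]] nyz.
  by rewrite /elim_graph yx zx nyz Hy Hz !orbT.
have [Eab|//] := ipath_shortcut sH HG doorG C ax bx.
by rewrite Eab eqxx in nab.
Qed.

Section FirstVertex.
Variable r : T -> nat.
Hypothesis rmin : forall c, c \in V -> c != x -> r x < r c.

Lemma filled_first a b : filled H r a b -> a = x \/ b = x -> H a b.
Proof.
move=> [_ C] abx; apply: (ipath_noint (P := pred0)) => //.
apply: (ipath_sub_in (U := fun c => c \in V) HV _ C) => c cV /=.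
have [->|cx] := eqVneq c x; last have := rmin cV cx.
  by case: abx => <-; rewrite ltnn ?andbF.
by case: abx => <-; lia.
Qed.

Lemma filled_common_first a b : H a x -> H b x -> a != b -> filled H r a b.
Proof.
move=> Ha Hb nab; split=> //.
have /andP[aV _] := HV Ha; have /andP[bV _] := HV Hb.
have neq_x c : H c x -> c != x by apply: contraTneq => ->; rewrite iH.
apply: (@ipath_cat _ _ _ a x b); [exact: ipath_edge| |by apply: ipath_edge; rewrite sH].
by rewrite /= !rmin ?neq_x.
Qed.

Lemma filled_of_elim a b : filled elim_graph r a b -> filled H r a b.
Proof.
move=> [nab C]; split=> //; have [aV bV] := ipath_ends elim_graph_supp C.
move: aV bV; rewrite !inE => /andP[ax aV] /andP[bx bV].
apply: ipath_expand C => y z /and3P[_ _ /orP[Hyz|/and3P[_ Hyx Hzx]]].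
  exact: ipath_edge.
by apply: (@ipath_cat _ _ _ y x z); [exact: ipath_edge|rewrite /= !rmin|
  apply: ipath_edge; rewrite sH].
Qed.

Lemma bartlett_ranking_elim B :
  bartlett_ranking H B r -> bartlett_ranking elim_graph B r.
Proof. by move=> GB u v w D1 D2 D3; apply: GB; apply: filled_of_elim. Qed.

End FirstVertex.
End Elimination.

Definition bartlett_last (T : finType) (V C : {set T}) (H B : rel T) r :=
  [/\ {in V &, injective r}, bartlett_ranking H B r &
      forall a c, a \in V -> a \notin C -> c \in C -> r a < r c].

Section CliqueLast.
Variables (T : finType) (V : {set T}) (H B : rel T) (r : T -> nat) (x : T).
Hypothesis HV : forall a b, H a b -> (a \in V) && (b \in V).
Hypothesis sH : symmetric H.
Hypothesis iH : irreflexive H.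
Hypothesis sB : symmetric B.
Hypothesis GB : bartlett_ranking H B r.
Hypothesis rmin : forall c, c \in V -> c != x -> r x < r c.

Lemma bartlett_ranking_cons r' : {in V :\ x &, injective r'} ->
  bartlett_ranking (elim_graph H x) B r' ->
  bartlett_ranking H B (cons_rank x r').
Proof.
move=> rinj GBx; apply: (bartlett_ranking_min HV sH sB (cons_rank_inj rinj)) => u.
have [->|ux] := eqVneq u x.
  have xmin c : c \in V -> c != x -> cons_rank x r' x < cons_rank x r' c.
    by move=> _ cx; rewrite /cons_rank eqxx (negbTE cx).
  move=> v w _ _ Dxv Dxw [nvw _].
  have Hxv := filled_first HV xmin Dxv (or_introl erefl).
  have Hxw := filled_first HV xmin Dxw (or_introl erefl).
  apply: GB; [exact: filled_edge| |exact: filled_edge].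
  by apply: (filled_common_first HV sH iH rmin); rewrite // sH.
apply: (bartlett_at_transport (elim_graph_sym x sH) _ GBx) => // b lub Dub.
have bx : b != x by apply: contraTneq lub => ->; rewrite /cons_rank eqxx.
split; last by move: lub; rewrite /cons_rank (negbTE ux) (negbTE bx).
apply: (filled_mono (elim_graph_supp HV)) (filled_elim sH Dub ux bx) => a c.
by rewrite !inE /cons_rank => /andP[/negbTE-> _] /andP[/negbTE-> _].
Qed.

Section Stack.
Variables (C : {set T}) (r' : T -> nat) (N : nat).
Hypothesis xC : x \in C.
Hypothesis Cclique : forall a b, a \in C -> b \in C -> a != b -> H a b.
Hypothesis rinj : {in V :\ x &, injective r'}.
Hypothesis GBx : bartlett_ranking (elim_graph H x) B r'.
Hypothesis Qlast : forall a q, a \in V :\ x -> ~~ H a x -> H q x -> r' a < r' q.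
Hypothesis bound : forall a, a \in V -> r' a < N.

Local Notation rs := (stack (~: C) r' (cons_rank x r') N).
Local Notation near a := ((a == x) || H a x).

Lemma stack_near c : c \in C -> near c.
Proof. by move=> cC; have [//|cx] := eqVneq c x; rewrite Cclique. Qed.

Lemma stack_low c : c \notin C -> rs c = r' c.
Proof. by rewrite /stack inE => ->. Qed.

Lemma stack_high c : c \in C -> N <= rs c.
Proof. by rewrite /stack inE => -> /=; apply: leq_addr. Qed.

(* Everything ranked after a neighbour of x is x or a neighbour of x, and any
   two of these are already filled in r, through x. *)
Lemma bartlett_at_stack_near u : near u -> bartlett_at H B rs u.
Proof.
move=> nu.
have filled_near a b : near a -> near b -> a != b -> filled H r a b.
  move=> /orP[/eqP->|Ha] /orP[/eqP->|Hb] nab; first by rewrite eqxx in nab.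
  - by apply: filled_edge; rewrite // sH.
  - exact: filled_edge.
  - exact: (filled_common_first HV sH iH rmin Ha Hb nab).
have later b : b \in V -> rs u < rs b -> near b.
  move=> bV; have [bC _|bC] := boolP (b \in C); first exact: stack_near.
  have [ux|ux] := eqVneq u x.
    by rewrite ux (stack_low bC); have := stack_high xC; have := bound bV; lia.
  move: nu => /orP[/eqP Eux|Hux]; first by rewrite Eux eqxx in ux.
  have [uC|uC] := boolP (u \in C).
    by have := stack_high uC; rewrite (stack_low bC); have := bound bV; lia.
  have bx : b != x by apply: contraNneq bC => ->.
  rewrite !stack_low // => lub; apply/orP; right; apply: contraTT lub => nHb.
  by rewrite -leqNgt ltnW // Qlast // !inE bx.
move=> v w luv luw [nuv Cuv] [nuw Cuw] [nvw Cvw].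
have [_ vV] := ipath_ends HV Cuv; have [_ wV] := ipath_ends HV Cuw.
have nv := later v vV luv; have nw := later w wV luw.
by apply: GB; apply: filled_near.
Qed.

(* A fill path from u to x would enter x through a neighbour of x ranked
   below u, but the neighbours of x are ranked after u. *)
Lemma bartlett_at_stack_far u : ~~ near u -> bartlett_at H B rs u.
Proof.
case/norP=> ux nHu.
have uC : u \notin C by apply: contra nHu => /stack_near; rewrite (negbTE ux).
apply: (bartlett_at_transport (elim_graph_sym x sH) _ GBx) => // b lub [nub Cub].
have [uV bV] := ipath_ends HV Cub.
have below c : c \in V -> rs c < rs u -> c \notin C /\ r' c < r' u.
  move=> cV; have [cC|cC] := boolP (c \in C); last by rewrite !stack_low.
  by have := stack_high cC; have := bound uV; rewrite (stack_low uC); lia.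
have bx : b != x.
  apply/eqP => Ebx; subst b.
  have [q [/andP[qx /existsP[_ /andP[/eqP-> Hqx]]] [Equ|/andP[lqu _]]]] :=
    ipath_exit (X := pred1 x) Cub ux (eqxx x); first by rewrite -Equ Hqx in nHu.
  have /andP[qV _] := HV Hqx; have [_ lt] := below q qV lqu.
  by have := @Qlast u q; rewrite !inE ux uV Hqx nHu => /(_ isT isT isT); lia.
have above : r' u < r' b.
  have [bC|bC] := boolP (b \in C); last by rewrite -!stack_low.
  have /orP[|Hbx] := stack_near bC; first by rewrite (negbTE bx).
  by apply: Qlast; rewrite ?inE ?ux.
split=> //; have [_ Cx] := filled_elim sH (conj nub Cub) ux bx; split=> //.
apply: (ipath_sub_in (elim_graph_supp HV)) Cx => c.
rewrite !inE => /andP[_ cV] /andP[lcu _]; have [_ lt] := below c cV lcu; lia.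
Qed.

Lemma stack_rank_inj : {in V &, injective rs}.
Proof.
have notx a : a \notin C -> a != x by apply: contraNneq => ->.
apply: stack_inj => [a /setIP[aV _]|a b|a b]; first exact: bound.
  rewrite !inE => /andP[aC aV] /andP[bC bV].
  by apply: rinj; rewrite !inE ?aV ?bV ?notx.
by rewrite !inE => /andP[_ aV] /andP[_ bV]; apply: (cons_rank_inj rinj).
Qed.

Lemma bartlett_ranking_stack : bartlett_ranking H B rs.
Proof.
apply: (bartlett_ranking_min HV sH sB stack_rank_inj) => u.
by have [/bartlett_at_stack_near|/bartlett_at_stack_far] := boolP (near u).
Qed.

Lemma stack_clique_last a c : a \in V -> a \notin C -> c \in C -> rs a < rs c.
Proof. by move=> aV aC cC; apply: stack_lt; rewrite ?inE ?aC ?cC ?bound. Qed.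

End Stack.

Variable C : {set T}.
Hypothesis Cclique : forall a b, a \in C -> b \in C -> a != b -> H a b.

Lemma bartlett_last_stack r' : x \in C ->
  bartlett_last (V :\ x) [set a | H a x] (elim_graph H x) B r' ->
  exists r'', bartlett_last V C H B r''.
Proof.
move=> xC [rinj GBx Qlast]; have [N bound] := rank_bound V r'.
have Qlast' a q : a \in V :\ x -> ~~ H a x -> H q x -> r' a < r' q.
  by move=> aVx nHa Hq; apply: Qlast; rewrite // inE.
exists (stack (~: C) r' (cons_rank x r') N); split.
- exact: stack_rank_inj xC rinj bound.
- exact: bartlett_ranking_stack xC Cclique rinj GBx Qlast' bound.
- exact: stack_clique_last bound.
Qed.

Lemma bartlett_last_cons r' : x \notin C ->
  bartlett_last (V :\ x) C (elim_graph H x) B r' ->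
  bartlett_last V C H B (cons_rank x r').
Proof.
move=> xC [rinj GBx Clast]; split.
- exact: cons_rank_inj.
- exact: bartlett_ranking_cons.
- move=> a c aV aC cC; have cx : c != x by apply: contraNneq xC => <-.
  rewrite /cons_rank (negbTE cx); have [//|ax] := eqVneq a x.
  by rewrite ltnS Clast // !inE ax.
Qed.

End CliqueLast.

Lemma exists_bartlett_last (T : finType) n :
  forall (V C : {set T}) (H B : rel T) (r : T -> nat), #|V| = n ->
  (forall a b, H a b -> (a \in V) && (b \in V)) ->
  symmetric H -> irreflexive H -> symmetric B ->
  {in V &, injective r} -> bartlett_ranking H B r -> C \subset V ->
  (forall a b, a \in C -> b \in C -> a != b -> H a b) ->
  exists r', bartlett_last V C H B r'.
Proof.
elim: n => [|n IH] V C H B r cardV HV sH iH sB rinj GB CV Cclique.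
  exists r; split=> // a c; move/eqP: cardV; rewrite cards_eq0 => /eqP->.
  by rewrite inE.
have [x0 x0V] : exists x0, x0 \in V by apply/card_gt0P; rewrite cardV.
have [x xV0 xmin] := arg_minnP r x0V; have xV : x \in V := xV0.
have rmin c : c \in V -> c != x -> r x < r c.
  by move=> cV cx; rewrite ltn_neqAle xmin // andbT; apply: contra cx => /eqP/rinj->.
have cardVx : #|V :\ x| = n by move: cardV; rewrite (cardsD1 x) xV add1n => -[].
have rinjx : {in V :\ x &, injective r}.
  by move=> a b /setD1P[_ aV] /setD1P[_ bV]; apply: rinj.
have IHx := IH _ _ _ B r cardVx (elim_graph_supp HV) (elim_graph_sym x sH)
  (elim_graph_irr x iH) sB rinjx (bartlett_ranking_elim HV sH rmin GB).
have neq_x a : H a x -> a != x by apply: contraTneq => ->; rewrite iH.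
have [xC|xC] := boolP (x \in C).
  have [||r' last'] := IHx [set a | H a x].
  - apply/subsetP => a; rewrite !inE => Hax; have /andP[-> _] := HV _ _ Hax.
    by rewrite neq_x.
  - move=> a b; rewrite !inE => Ha Hb nab.
    by rewrite /elim_graph nab Ha Hb !neq_x // !orbT.
  - exact: (bartlett_last_stack HV sH iH sB GB rmin Cclique xC last').
have notC_x a : a \in C -> a != x by apply: contraTneq => ->.
have [||r' last'] := IHx C.
- by apply/subsetP => c cC; rewrite !inE (subsetP CV) // notC_x.
- by move=> a b aC bC nab; rewrite /elim_graph Cclique // !notC_x.
- by exists (cons_rank x r'); apply: (bartlett_last_cons HV sH iH sB GB rmin xC last').
Qed.

Section FillIn.
Variables (T : finType) (e : rel T).
Hypothesis e_sym : symmetric e.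
Hypothesis e_irr : irreflexive e.
Implicit Types (V : {set T}) (s : seq T).

Lemma E0_supp V a b : E0 e V a b -> (a \in V) && (b \in V).
Proof. by case/and3P=> _ -> ->. Qed.

Lemma E0_sym V : symmetric (E0 e V).
Proof. by move=> a b; rewrite /E0 e_sym; case: (a \in V); case: (b \in V); rewrite ?andbF. Qed.

Lemma E0_irr V : irreflexive (E0 e V).
Proof. by move=> a; rewrite /E0 e_irr. Qed.

Lemma E0_sub V1 V a b : V1 \subset V -> E0 e V1 a b -> E0 e V a b.
Proof. by move=> /subsetP sV /and3P[eab /sV aV /sV bV]; rewrite /E0 eab aV bV. Qed.

Definition below s k u v c :=
  [&& sigma s c <= k, sigma s c < sigma s u & sigma s c < sigma s v].

Lemma Esigma_path V s k u v : Esigma e V s k u v ->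
  u != v /\ ipath (E0 e V) (below s k u v) u v.
Proof.
elim: k u v => [|k IH] u v /=.
  move=> Euv; split; last exact: ipath_edge.
  by apply: contraTneq Euv => ->; rewrite E0_irr.
case/orP=> [/IH[nuv C]|/and5P[nuv _ _ lu /andP[lv /existsP[w]]]].
  by split=> //; apply: ipath_sub C => c /and3P[? ? ?]; apply/and3P; split=> //; lia.
case/and4P=> _ /eqP sw /IH[_ Cuw] /IH[_ Cvw]; split=> //.
apply: (@ipath_cat _ _ _ u w v); last first.
- apply: ipath_sym (E0_sym V) _; apply: ipath_sub Cvw => c /and3P[? ? ?].
  by apply/and3P; split; lia.
- by rewrite /below sw leqnn lu lv.
by apply: ipath_sub Cuw => c /and3P[? ? ?]; apply/and3P; split; lia.
Qed.

Lemma path_Esigma V s k u v : is_ordering V s -> u != v ->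
  ipath (E0 e V) (below s k u v) u v -> Esigma e V s k u v.
Proof.
move=> [_ sV]; elim: k u v => [|k IH] u v nuv C /=.
  by apply: ipath_noint C => c; rewrite /below /sigma.
have sV_ipath P a b : ipath (E0 e V) P a b -> (a \in s) && (b \in s).
  by case/(ipath_ends (@E0_supp V)) => aV bV; rewrite !sV aV bV.
have lower (P : pred T) a b :
    (forall c, c \in s -> P c -> below s k.+1 a b c && (sigma s c != k.+1)) ->
    ipath (E0 e V) P a b -> ipath (E0 e V) (below s k a b) a b.
  move=> Pk; apply: (ipath_sub_in (@E0_supp V)) => c; rewrite -sV => /Pk/[apply].
  by case/andP=> /and3P[? ? ?] ?; apply/and3P; split=> //; lia.
case: (pickP [pred w | (w \in s) && (sigma s w == k.+1)]) => [w /andP[wS /eqP sw]|none].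
  case: (ipath_avoid w C) => [Cw|[/and3P[_ lwu lwv] Cuw Cwv]].
    apply/orP; left; apply/IH/(lower _ _ _ _ Cw) => // c cS /andP[-> cw] /=.
    by apply: contra cw => /eqP; rewrite -sw => -[] /(index_inj _ cS wS)->.
  have to_w a : a = u \/ a = v ->
      ripath (E0 e V) (predI (below s k.+1 u v) (predC1 w)) a w -> Esigma e V s k a w.
    move=> Ea; have lwa : sigma s w < sigma s a by case: Ea => ->.
    case=> [Eaw|Caw]; first by rewrite Eaw ltnn in lwa.
    apply: IH; first by apply: contraTneq lwa => ->; rewrite ltnn.
    apply: (lower _ _ _ _ Caw) => c cS /andP[/and3P[? ? ?] cw].
    have sc : sigma s c != k.+1.
      by apply: contra cw => /eqP; rewrite -sw => -[] /(index_inj _ cS wS)->.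
    by rewrite sc andbT /below sw; case: Ea => ->; apply/and3P; split=> //; lia.
  have /andP[uS vS] := sV_ipath _ _ _ C.
  apply/orP; right; rewrite nuv uS vS -sw lwu lwv /=; apply/existsP; exists w.
  rewrite wS eqxx (to_w u (or_introl erefl) Cuw) /=.
  apply: to_w; first by right.
  by case: Cwv => [<-|/(ipath_sym (E0_sym V))]; [left|right].
apply/orP; left; apply/IH/(lower _ _ _ _ C) => // c cS /= Pc; rewrite Pc /=.
by apply: contraFN (none c) => sc; rewrite /= cS sc.
Qed.

Lemma sigma_inj V s : is_ordering V s -> {in V &, injective (sigma s)}.
Proof. by move=> [_ sV] a b; rewrite -!sV /sigma => aS bS [] /(index_inj a aS bS). Qed.

Lemma Dsigma_filled V s u v : is_ordering V s ->
  Dsigma e V s u v <-> filled (E0 e V) (sigma s) u v.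
Proof.
move=> ord; split.
  by case/Esigma_path=> nuv C; split=> //; apply: ipath_sub C => c /and3P[_ -> ->].
move=> [nuv C]; apply: path_Esigma => //; have [uV vV] := ipath_ends (@E0_supp V) C.
have sigma_le a : a \in V -> sigma s a <= size s.
  by case: ord => _ sV; rewrite -sV /sigma index_mem.
have suv : sigma s u != sigma s v by apply: contra nuv => /eqP/(sigma_inj ord)->.
have := sigma_le u uV; have := sigma_le v vV.
by move=> ? ?; apply: ipath_sub C => c /andP[? ?]; apply/and3P; split=> //; lia.
Qed.

Lemma gen_bartlett_rankingP V : gen_bartlett e V <->
  exists r, {in V &, injective r} /\ bartlett_ranking (E0 e V) (E0 e V) r.
Proof.
split=> [[s [ord no_triangle]]|[r [rinj GB]]].
  exists (sigma s); split=> [|u v w D1 D2 D3]; first exact: sigma_inj ord.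
  apply: contraT; rewrite !negb_or => /andP[/andP[n1 n2] n3]; apply/negP => _.
  apply: no_triangle; exists u, v, w.
  by split; rewrite ?n1 ?n2 ?n3 //; apply/(Dsigma_filled _ _ ord).
pose s := sort (fun a b => r a <= r b) (enum V).
have ord : is_ordering V s.
  by split=> [|a]; rewrite ?sort_uniq ?enum_uniq // mem_sort mem_enum.
have sorted_s : sorted (fun a b => r a <= r b) s.
  by apply: sort_sorted => a b; apply: leq_total.
have sigma_r a b : a \in V -> b \in V -> sigma s a < sigma s b -> r a < r b.
  case: ord => _ sV aV bV lab; rewrite ltn_neqAle; apply/andP; split.
    by apply: contraTneq lab => /rinj->; rewrite ?ltnn.
  have r_trans : transitive (fun a b => r a <= r b) by move=> ? ? ?; apply: leq_trans.
  by apply: (sorted_ltn_index r_trans sorted_s); rewrite ?sV.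
exists s; split=> // -[u [v [w [/and3P[n1 n2 n3] D1 D2 D3]]]].
have GBs := bartlett_ranking_mono (@E0_supp V) sigma_r GB.
move: (GBs u v w); rewrite !(Dsigma_filled _ _ ord) in D1 D2 D3.
by move=> /(_ D1 D2 D3); rewrite (negbTE n1) (negbTE n2) (negbTE n3).
Qed.

End FillIn.

Lemma decomposition_sym (T : finType) (e : rel T) V V1 V2 : symmetric e ->
  decomposition e V V1 V2 -> decomposition e V V2 V1.
Proof.
move=> e_sym [VU /and3P[A B S] Scl noAB]; split.
- by rewrite setUC.
- by rewrite B A setIC S.
- by move=> x y; rewrite setIC; apply: Scl.
- by move=> x y xB yA; rewrite e_sym noAB.
Qed.

Section DecompositionSide.
Variables (T : finType) (e : rel T) (V V1 V2 : {set T}).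
Hypothesis e_sym : symmetric e.
Hypothesis dec : decomposition e V V1 V2.

Lemma decomp_left a : a \in V -> a \notin V2 :\: V1 -> a \in V1.
Proof. by case: dec => -> _ _ _; rewrite !inE; case: (a \in V1); case: (a \in V2). Qed.

Lemma decomp_door a b :
  a \notin V2 :\: V1 -> b \in V2 :\: V1 -> E0 e V a b -> a \in V1 :&: V2.
Proof.
move=> aB bB /and3P[eab aV _]; have a1 := decomp_left aV aB.
rewrite inE a1; apply: contraLR eab => a2; case: dec => _ _ _ -> //.
by rewrite inE a1 a2.
Qed.

Lemma decomp_shortcut P a b : ipath (E0 e V) P a b ->
  a \notin V2 :\: V1 -> b \notin V2 :\: V1 -> ripath (E0 e V1) P a b.
Proof.
apply: ipath_shortcut => [|y z yB zB /and3P[eyz yV zV]|y z].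
- exact: E0_sym.
- by rewrite /E0 eyz !decomp_left.
move=> /andP[yB /existsP[y' /andP[y'B Ey]]] /andP[zB /existsP[z' /andP[z'B Ez]]] nyz.
have /setIP[y1 y2] := decomp_door yB y'B Ey; have /setIP[z1 z2] := decomp_door zB z'B Ez.
by case: dec => _ _ Scl _; rewrite /E0 y1 z1 Scl // inE ?y1 ?y2 ?z1 ?z2.
Qed.

End DecompositionSide.

Lemma decomp_separator (T : finType) (e : rel T) V V1 V2 (P : pred T) a b :
  symmetric e -> decomposition e V V1 V2 -> ipath (E0 e V) P a b ->
  a \in V2 :\: V1 -> b \in V1 :\: V2 -> exists2 q, q \in V1 :&: V2 & P q.
Proof.
move=> e_sym dec C aB bA; have aA : a \notin V1 :\: V2.
  by move: aB; rewrite !inE => /andP[/negbTE-> _]; rewrite andbF.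
have [q [/andP[qA /existsP[y /andP[yA Eqy]]] Pq]] :=
  ipath_exit (X := fun c => c \in V1 :\: V2) C aA bA.
have qS := decomp_door (decomposition_sym e_sym dec) qA yA Eqy.
exists q; first by rewrite setIC.
case: Pq => // Eqa; move: qS aB; rewrite Eqa !inE.
by case: (a \in V1); rewrite ?andbF.
Qed.

Section Combination.
Variables (T : finType) (e : rel T) (V V1 V2 : {set T}).
Hypothesis e_sym : symmetric e.
Hypothesis dec : decomposition e V V1 V2.
Variables (r1 r2 : T -> nat) (M : nat).
Hypothesis GB1 : bartlett_ranking (E0 e V1) (E0 e V1) r1.
Hypothesis GB2 : bartlett_ranking (E0 e V2) (E0 e V2) r2.
Hypothesis r2_last :
  forall a c, a \in V2 -> a \notin V1 :&: V2 -> c \in V1 :&: V2 -> r2 a < r2 c.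
Hypothesis bound : forall a, a \in V2 -> r2 a < M.

Local Notation r := (stack (V2 :\: V1) r2 r1 M).

Lemma V1_sub : V1 \subset V.
Proof. by case: dec => -> _ _ _; apply: subsetUl. Qed.

Lemma V2_sub : V2 \subset V.
Proof. by case: dec => -> _ _ _; apply: subsetUr. Qed.

Lemma bartlett_at_left u : u \notin V2 :\: V1 -> bartlett_at (E0 e V) (E0 e V) r u.
Proof.
move=> uB; apply: (bartlett_at_transport (E0_sym e_sym V1) (fun a b => E0_sub V1_sub) GB1).
move=> b lub [nub Cub]; have [uV bV] := ipath_ends (@E0_supp _ e V) Cub.
have bB : b \notin V2 :\: V1.
  apply: contraTN lub => bB; rewrite -leqNgt /stack bB (negbTE uB).
  by have := bound (setDP bB).1; lia.
have lt1 : r1 u < r1 b by move: lub; rewrite /stack (negbTE uB) (negbTE bB) ltn_add2l.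
split=> //; have R := decomp_shortcut e_sym dec Cub uB bB.
apply: (filled_of_ripath (@E0_supp _ e V1)) nub R _.
move=> c c1 /andP[lcu _].
have cB : c \notin V2 :\: V1 by rewrite inE c1.
by move: lcu; rewrite /stack (negbTE uB) (negbTE cB) ltn_add2l => lc; rewrite lc; lia.
Qed.

Lemma bartlett_at_right u : u \in V2 :\: V1 -> bartlett_at (E0 e V) (E0 e V) r u.
Proof.
move=> uB; have /setDP[u2 u1] := uB.
apply: (bartlett_at_transport (E0_sym e_sym V2) (fun a b => E0_sub V2_sub) GB2).
move=> b lub [nub Cub]; have [uV bV] := ipath_ends (@E0_supp _ e V) Cub.
have below c : r c < r u -> c \in V2 :\: V1 /\ r2 c < r2 u.
  rewrite /stack uB; case: ifP => [cB|_] lt; first by split.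
  by have := bound u2; lia.
have bA : b \notin V1 :\: V2.
  apply/negP => bA; have [q /setIP[q1 _] /andP[/below[/setDP[_ nq1] _] _]] :=
    decomp_separator e_sym dec Cub uB bA.
  by case/negP: nq1.
have lt2 : r2 u < r2 b.
  have [bB|bB] := boolP (b \in V2 :\: V1); first by move: lub; rewrite /stack uB bB.
  have bS : b \in V1 :&: V2.
    move: bA bB bV; case: dec => -> _ _ _; rewrite !inE.
    by case: (b \in V1); case: (b \in V2).
  by apply: r2_last => //; rewrite inE negb_and u1.
split=> //; have dec' := decomposition_sym e_sym dec.
apply: (filled_of_ripath (@E0_supp _ e V2)) nub (decomp_shortcut e_sym dec' Cub _ bA) _.
  by rewrite inE (negbTE u1) andbF.
by move=> c _ /andP[/below[_ lc] _]; rewrite lc; lia.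
Qed.

End Combination.

Lemma gen_bartlett_decomposition (T : finType) (e : rel T) (V V1 V2 : {set T}) :
  symmetric e -> irreflexive e -> decomposition e V V1 V2 ->
  gen_bartlett e V1 -> gen_bartlett e V2 -> gen_bartlett e V.
Proof.
move=> e_sym e_irr dec /(gen_bartlett_rankingP e_sym e_irr)[r1 [r1inj GB1]].
move=> /(gen_bartlett_rankingP e_sym e_irr)[r2 [r2inj GB2]].
have [|r2' [r2'inj GB2' S_last]] := exists_bartlett_last erefl
  (@E0_supp _ e V2) (E0_sym e_sym V2) (E0_irr e_irr V2) (E0_sym e_sym V2)
  r2inj GB2 (subsetIr V1 V2).
  move=> a b aS bS nab; have /setIP[_ a2] := aS; have /setIP[_ b2] := bS.
  by case: dec => _ _ Scl _; rewrite /E0 a2 b2 Scl.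
have [M bound] := rank_bound V2 r2'.
have rinj : {in V &, injective (stack (V2 :\: V1) r2' r1 M)}.
  apply: stack_inj => [a /setIP[_ /setDP[a2 _]]|a b|a b]; first exact: bound.
    by move=> /setIP[_ /setDP[a2 _]] /setIP[_ /setDP[b2 _]]; apply: r2'inj.
  by move=> /setDP[aV aB] /setDP[bV bB]; apply: r1inj; rewrite (decomp_left dec).
apply/(gen_bartlett_rankingP e_sym e_irr); exists (stack (V2 :\: V1) r2' r1 M); split=> //.
apply: (bartlett_ranking_min (@E0_supp _ e V) (E0_sym e_sym V) (E0_sym e_sym V) rinj) => u.
have [uB|uB] := boolP (u \in V2 :\: V1).
  exact: (bartlett_at_right e_sym dec GB2' S_last bound uB).
exact: (bartlett_at_left e_sym dec GB1 bound uB).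
Qed.

Lemma decomposes_into_gen_bartlett (T : finType) (e : rel T) (V : {set T}) :
  symmetric e -> irreflexive e ->
  decomposes_into e (gen_bartlett e) V -> gen_bartlett e V.
Proof.
move=> e_sym e_irr; elim=> // {}V V1 V2 dec _ GB1 _ GB2.
exact: gen_bartlett_decomposition dec GB1 GB2.
Qed.

Theorem lemma3 (T : finType) (e : rel T) (e_sym : symmetric e)
  (e_irr : irreflexive e) :
  decomposes_into e (gen_bartlett e) [set: T] -> gen_bartlett e [set: T].
Proof. exact: decomposes_into_gen_bartlett. Qed.
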